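(* A $\star$-metric space $(X,d^\star)$ is complete if and only if every family $\{F_s\}_{s\in S}$ of closed subsets of $X$ which has the finite intersection property and which, for every $\epsilon>0$, contains a set of diameter less than $\epsilon$, has nonempty intersection $\bigcap_{s\in S}F_s\neq\emptyset$.
   Context: A $t$-definer is a function $\star:[0,\infty)\times[0,\infty)\to[0,\infty)$ such that for all $a,b,c\ge 0$: $a\star b=b\star a$; $a\star(b\star c)=(a\star b)\star c$; if $a\le b$ then $a\star c\le b\star c$; $a\star 0=a$; and $\star$ is continuous in its first variable with respect to the Euclidean topology. Given a nonempty set $X$ and a $t$-definer $\star$, a $\star$-metric on $X$ is a function $d^\star:X\times X\to[0,\infty)$ such that for all $x,y,z\in X$: $d^\star(x,y)=0$ iff $x=y$; $d^\star(x,y)=d^\star(y,x)$; and $d^\star(x,y)\le d^\star(x,z)\star d^\star(z,y)$. Closedness refers to the topology consisting of all $U\subseteq X$ such that for each $a\in U$ there is $r>0$ with $\{x: d^\star(a,x)<r\}\subseteq U$. The diameter of $A\subseteq X$ is $\delta(A)=\sup_{x,y\in A}d^\star(x,y)$, with $\delta(\emptyset)=0$. A family has the finite intersection property if every finite subfamily has nonempty intersection. A sequence $\{x_n\}$ is Cauchy if for every $\epsilon>0$ there is $k$ with $d^\star(x_n,x_m)<\epsilon$ for all $m,n\ge k$; it converges to $x$ if for every $\epsilon>0$ there is $k$ with $d^\star(x,x_n)<\epsilon$ for $n\ge k$. $(X,d^\star)$ is complete if every Cauchy sequence converges to a point of $X$. *)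

From Stdlib Require Import Reals.
From Coquelicot Require Import Coquelicot.
Open Scope R_scope.

Definition t_definer (star : R -> R -> R) : Prop :=
  (forall a b, 0 <= a -> 0 <= b -> 0 <= star a b) /\
  (forall a b, 0 <= a -> 0 <= b -> star a b = star b a) /\
  (forall a b c, 0 <= a -> 0 <= b -> 0 <= c ->
       star a (star b c) = star (star a b) c) /\
  (forall a b c, 0 <= a -> 0 <= b -> 0 <= c -> a <= b -> star a c <= star b c) /\
  (forall a, 0 <= a -> star a 0 = a) /\
  (forall b a, 0 <= b -> 0 <= a ->
     forall eps, 0 < eps -> exists delta, 0 < delta /\
       forall x, 0 <= x -> Rabs (x - a) < delta ->
         Rabs (star x b - star a b) < eps).

Definition star_metric {X : Type} (star : R -> R -> R) (d : X -> X -> R) : Prop :=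
  (forall x y, 0 <= d x y) /\
  (forall x y, d x y = 0 <-> x = y) /\
  (forall x y, d x y = d y x) /\
  (forall x y z, d x y <= star (d x z) (d z y)).

Definition sm_open {X : Type} (d : X -> X -> R) (U : X -> Prop) : Prop :=
  forall a, U a -> exists r, 0 < r /\ forall x, d a x < r -> U x.

Definition sm_closed {X : Type} (d : X -> X -> R) (F : X -> Prop) : Prop :=
  sm_open d (fun x => ~ F x).

(* diameter in the extended reals: sup of distances, 0 for the empty set
   (0 is added to the set; harmless since distances are >= 0) *)
Definition diam {X : Type} (d : X -> X -> R) (A : X -> Prop) : Rbar :=
  Lub_Rbar (fun r => r = 0 \/ exists x y, A x /\ A y /\ r = d x y).

Definition cauchy_seq {X : Type} (d : X -> X -> R) (u : nat -> X) : Prop :=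
  forall eps, 0 < eps -> exists k, forall m n, (k <= m)%nat -> (k <= n)%nat ->
    d (u n) (u m) < eps.

Definition converges_to {X : Type} (d : X -> X -> R) (u : nat -> X) (x : X) : Prop :=
  forall eps, 0 < eps -> exists k, forall n, (k <= n)%nat -> d x (u n) < eps.

Definition sm_complete {X : Type} (d : X -> X -> R) : Prop :=
  forall u, cauchy_seq d u -> exists x, converges_to d u x.

Definition finite_intersection_property {X S : Type} (F : S -> X -> Prop) : Prop :=
  forall l : list S, exists x, forall s, List.In s l -> F s x.

(* Completeness implies the Cantor property: choosing sets F_(s_n) of diameter
   below 1/(n+1) and points x_n in F_(s_0) ∩ ... ∩ F_(s_n) yields a Cauchy
   sequence whose limit is adherent to, hence lies in, every closed F_s.
   Conversely, a Cauchy sequence u defines the closed "tail balls"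
   {x | d(x, u_m) <= e for all m >= N}, indexed by the pairs (e, N) for which
   the tail of u past N has oscillation below e; they have the finite
   intersection property and arbitrarily small diameter, and a common point is
   a limit of u.  On both sides the t-definer enters only through its
   continuity at 0 (a ⋆ b is close to b for small a), which makes the
   ⋆-triangle inequality behave like the ordinary one at small scales. *)

From Stdlib Require Import Reals Lra Lia List Classical ClassicalEpsilon.
From Coquelicot Require Import Coquelicot.
Open Scope R_scope.

Section TDefiner.
Variable star : R -> R -> R.
Hypothesis Hstar : t_definer star.

Lemma star_0l b : 0 <= b -> star 0 b = b.
Proof.
  destruct Hstar as [_ [Hcomm [_ [_ [Hid _]]]]]; intros Hb.
  rewrite Hcomm by lra; now apply Hid.
Qed.

Lemma star_le_l a b c : 0 <= a -> 0 <= b -> 0 <= c -> a <= b -> star a c <= star b c.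
Proof. now apply Hstar. Qed.

Lemma star_le_r a b c : 0 <= a -> 0 <= b -> 0 <= c -> b <= c -> star a b <= star a c.
Proof.
  destruct Hstar as [_ [Hcomm _]]; intros.
  rewrite (Hcomm a b), (Hcomm a c) by lra; now apply star_le_l.
Qed.

Lemma star_lt_add_small b eps : 0 <= b -> 0 < eps ->
  exists delta, 0 < delta /\ forall a, 0 <= a -> a < delta -> star a b < b + eps.
Proof.
  destruct Hstar as [_ [_ [_ [_ [_ Hcont]]]]]; intros Hb Heps.
  destruct (Hcont b 0 Hb (Rle_refl 0) eps Heps) as [delta [Hdelta Hnear]].
  exists delta; split; [exact Hdelta|]; intros a Ha Hlt.
  assert (Hdist : Rabs (a - 0) < delta) by (rewrite Rminus_0_r, Rabs_pos_eq; lra).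
  specialize (Hnear a Ha Hdist); rewrite star_0l in Hnear by exact Hb.
  apply Rabs_def2 in Hnear; lra.
Qed.

End TDefiner.

Lemma Rinv_INR_succ_lt eps : 0 < eps -> exists k, / INR (S k) < eps.
Proof.
  intros Heps; destruct (archimed_cor1 eps Heps) as [N [HN HN0]].
  exists N; eapply Rle_lt_trans; [|exact HN].
  apply Rinv_le_contravar; [apply lt_0_INR; lia | rewrite S_INR; lra].
Qed.

Lemma Rinv_INR_succ_gt0 n : 0 < / INR (S n).
Proof. apply Rinv_0_lt_compat, lt_0_INR; lia. Qed.

Section Diameter.
Context {X : Type} (d : X -> X -> R).

Lemma diam_le_bound (A : X -> Prop) (M : R) :
  0 <= M -> (forall x y, A x -> A y -> d x y <= M) -> Rbar_le (diam d A) M.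
Proof.
  intros HM Hbound; unfold diam.
  apply Lub_Rbar_correct; intros r [-> | [x [y [Hx [Hy ->]]]]]; simpl; auto.
Qed.

Lemma dist_lt_of_diam_lt (A : X -> Prop) (eps : R) x y :
  Rbar_lt (diam d A) eps -> A x -> A y -> d x y < eps.
Proof.
  intros Hdiam Hx Hy; apply (Rbar_le_lt_trans (d x y) (diam d A) eps); [|exact Hdiam].
  apply Lub_Rbar_correct; right; now exists x, y.
Qed.

Lemma sm_closed_adherent (F : X -> Prop) x :
  sm_closed d F -> (forall eps, 0 < eps -> exists y, F y /\ d x y < eps) -> F x.
Proof.
  intros Hcl Hadh; apply NNPP; intros Hx.
  destruct (Hcl x Hx) as [r [Hr Hball]].
  destruct (Hadh r Hr) as [y [Hy Hxy]].
  exact (Hball y Hxy Hy).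
Qed.

Lemma sm_closed_forall {I : Type} (F : I -> X -> Prop) :
  (forall i, sm_closed d (F i)) -> sm_closed d (fun x => forall i, F i x).
Proof.
  intros Hcl x Hx; apply not_all_ex_not in Hx as [i Hi].
  destruct (Hcl i x Hi) as [r [Hr Hball]].
  exists r; split; [exact Hr|]; intros y Hxy Hall; exact (Hball y Hxy (Hall i)).
Qed.

Lemma sm_closed_impl (P : Prop) (F : X -> Prop) :
  sm_closed d F -> sm_closed d (fun x => P -> F x).
Proof.
  intros Hcl x Hx; apply imply_to_and in Hx as [HP Hx].
  destruct (Hcl x Hx) as [r [Hr Hball]].
  exists r; split; [exact Hr|]; intros y Hxy Hy; exact (Hball y Hxy (Hy HP)).
Qed.

End Diameter.

Section StarMetric.
Context {X : Type} (star : R -> R -> R) (d : X -> X -> R).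
Hypothesis Hstar : t_definer star.
Hypothesis Hd : star_metric star d.

Lemma dist_ge0 x y : 0 <= d x y.
Proof. now apply Hd. Qed.

Lemma dist_sym x y : d x y = d y x.
Proof. now apply Hd. Qed.

Lemma dist_star_triangle x y z : d x y <= star (d x z) (d z y).
Proof. now apply Hd. Qed.

Lemma dist_lt_trans_small eps : 0 < eps ->
  exists delta, 0 < delta /\
    forall x y z, d x z < delta -> d z y < delta -> d x y < eps.
Proof.
  intros Heps.
  destruct (star_lt_add_small star Hstar (eps / 2) (eps / 2)) as [delta [Hdelta Hnear]];
    try lra.
  exists (Rmin delta (eps / 2)); split; [apply Rmin_glb_lt; lra|].
  intros x y z Hxz Hzy.
  pose proof (Rmin_l delta (eps / 2)); pose proof (Rmin_r delta (eps / 2)).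
  eapply Rle_lt_trans; [apply (dist_star_triangle x y z)|].
  eapply Rle_lt_trans; [apply (star_le_r star Hstar _ _ (eps / 2)); [apply dist_ge0 | apply dist_ge0 | lra | left; lra]|].
  specialize (Hnear (d x z) (dist_ge0 x z) ltac:(lra)); lra.
Qed.

Lemma sm_closed_ball z r : sm_closed d (fun x => d x z <= r).
Proof.
  intros x Hx; apply Rnot_le_lt in Hx.
  destruct (Rle_or_lt 0 r) as [Hr | Hr].
  - destruct (star_lt_add_small star Hstar r (d x z - r)) as [delta [Hdelta Hnear]];
      try lra.
    exists delta; split; [exact Hdelta|]; intros y Hxy Hy.
    pose proof (dist_star_triangle x z y).
    pose proof (star_le_r star Hstar (d x y) (d y z) r (dist_ge0 x y) (dist_ge0 y z) Hr Hy).
    specialize (Hnear (d x y) (dist_ge0 x y) Hxy); lra.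
  - exists 1; split; [lra|]; intros y _ Hy; pose proof (dist_ge0 y z); lra.
Qed.

Section NestedSequence.
Variables (I : Type) (F : I -> X -> Prop) (sf : nat -> I) (xs : nat -> X).
Hypothesis Hsf : forall n, Rbar_lt (diam d (F (sf n))) (/ INR (S n)).
Hypothesis Hxs : forall k n, (k <= n)%nat -> F (sf k) (xs n).

Lemma nested_seq_cauchy : cauchy_seq d xs.
Proof.
  intros eps Heps; destruct (Rinv_INR_succ_lt eps Heps) as [k Hk].
  exists k; intros m n Hm Hn; eapply Rlt_trans; [|exact Hk].
  apply (dist_lt_of_diam_lt d (F (sf k))); auto.
Qed.

(* The limit is close to x_n, which is close to any point of F_s ∩ F_(s_k). *)
Lemma nested_seq_limit_adherent x :
  finite_intersection_property F -> converges_to d xs x ->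
  forall s eps, 0 < eps -> exists y, F s y /\ d x y < eps.
Proof.
  intros Hfip Hconv s eps Heps.
  destruct (dist_lt_trans_small eps Heps) as [delta [Hdelta Htrans]].
  destruct (Rinv_INR_succ_lt delta Hdelta) as [k Hk].
  destruct (Hconv delta Hdelta) as [K HK].
  destruct (Hfip (s :: sf k :: nil)) as [y Hy].
  exists y; split; [apply Hy; simpl; auto|].
  apply (Htrans x y (xs (max k K))); [apply HK; lia|].
  eapply Rlt_trans; [|exact Hk].
  apply (dist_lt_of_diam_lt d (F (sf k))); [exact (Hsf k) | apply Hxs; lia |].
  apply Hy; simpl; auto.
Qed.

End NestedSequence.

Lemma complete_closed_fip_inter (I : Type) (F : I -> X -> Prop) :
  sm_complete d ->
  (forall s, sm_closed d (F s)) ->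
  finite_intersection_property F ->
  (forall eps, 0 < eps -> exists s, Rbar_lt (diam d (F s)) (Finite eps)) ->
  exists x, forall s, F s x.
Proof.
  intros Hcomp Hcl Hfip Hdiam.
  destruct (choice (fun n s => Rbar_lt (diam d (F s)) (/ INR (S n))))
    as [sf Hsf].
  { intros n; exact (Hdiam _ (Rinv_INR_succ_gt0 n)). }
  destruct (choice (fun n x => forall s, In s (map sf (seq 0 (S n))) -> F s x))
    as [xs Hxs].
  { intros n; apply Hfip. }
  assert (Hnested : forall k n, (k <= n)%nat -> F (sf k) (xs n)).
  { intros k n Hkn; apply Hxs, in_map, in_seq; lia. }
  destruct (Hcomp xs (nested_seq_cauchy I F sf xs Hsf Hnested)) as [x Hconv].
  exists x; intros s; apply (sm_closed_adherent d); [exact (Hcl s)|].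
  exact (nested_seq_limit_adherent I F sf xs Hsf Hnested x Hfip Hconv s).
Qed.

Section TailBalls.
Variable u : nat -> X.

Definition cauchy_modulus (e : R) (N : nat) : Prop :=
  forall m n, (N <= m)%nat -> (N <= n)%nat -> d (u n) (u m) < e.

Definition tail_ball (e : R) (N : nat) (x : X) : Prop :=
  forall m, (N <= m)%nat -> d x (u m) <= e.

Lemma tail_ball_closed e N : sm_closed d (tail_ball e N).
Proof.
  apply (sm_closed_forall d (fun m x => (N <= m)%nat -> d x (u m) <= e)).
  intros m; apply sm_closed_impl, sm_closed_ball.
Qed.

Lemma cauchy_modulus_tail_ball e N M :
  cauchy_modulus e N -> (N <= M)%nat -> tail_ball e N (u M).
Proof. intros Hmod HNM m Hm; left; now apply Hmod. Qed.

Definition tail_index : Type := {p : R * nat | cauchy_modulus (fst p) (snd p)}.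

Definition tail_ball_of (p : tail_index) : X -> Prop :=
  tail_ball (fst (proj1_sig p)) (snd (proj1_sig p)).

Lemma tail_ball_fip : finite_intersection_property tail_ball_of.
Proof.
  intros l; set (starts := map (fun p : tail_index => snd (proj1_sig p)) l).
  assert (Hbound : List.Forall (fun N => (N <= list_max starts)%nat) starts)
    by (apply list_max_le, le_n).
  exists (u (list_max starts)); intros p Hin.
  apply cauchy_modulus_tail_ball; [exact (proj2_sig p)|].
  apply (proj1 (List.Forall_forall _ _) Hbound); exact (in_map _ l p Hin).
Qed.

Lemma small_tail_ball eps : cauchy_seq d u -> 0 < eps ->
  exists p : tail_index, fst (proj1_sig p) < eps /\
    Rbar_lt (diam d (tail_ball_of p)) (Finite eps).
Proof.
  intros Hcau Heps.
  destruct (dist_lt_trans_small (eps / 2)) as [delta [Hdelta Htrans]]; [lra|].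
  set (e := Rmin delta eps / 2).
  assert (He : 0 < e /\ e < delta /\ e < eps).
  { pose proof (Rmin_l delta eps); pose proof (Rmin_r delta eps).
    assert (0 < Rmin delta eps) by (apply Rmin_glb_lt; lra).
    unfold e; lra. }
  destruct (Hcau e (proj1 He)) as [N HN].
  exists (exist _ (e, N) HN); simpl; split; [lra|].
  apply (Rbar_le_lt_trans _ (eps / 2)); [|simpl; lra].
  apply diam_le_bound; [lra|]; intros x y Hx Hy; left.
  specialize (Hx N (le_n N)); specialize (Hy N (le_n N)); simpl in Hx, Hy.
  apply (Htrans x y (u N)); [|rewrite dist_sym]; lra.
Qed.

Lemma tail_balls_inter_limit x : cauchy_seq d u ->
  (forall p, tail_ball_of p x) -> converges_to d u x.
Proof.
  intros Hcau Hx eps Heps.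
  destruct (small_tail_ball (eps / 2) Hcau) as [p [Hp _]]; [lra|].
  exists (snd (proj1_sig p)); intros n Hn; specialize (Hx p n Hn); lra.
Qed.

End TailBalls.

Lemma closed_fip_inter_complete :
  (forall (I : Type) (F : I -> X -> Prop),
     (forall s, sm_closed d (F s)) ->
     finite_intersection_property F ->
     (forall eps, 0 < eps -> exists s, Rbar_lt (diam d (F s)) (Finite eps)) ->
     exists x, forall s, F s x) ->
  sm_complete d.
Proof.
  intros Hinter u Hcau.
  destruct (Hinter (tail_index u) (tail_ball_of u)) as [x Hx].
  - intros p; apply tail_ball_closed.
  - apply tail_ball_fip.
  - intros eps Heps; destruct (small_tail_ball u eps Hcau Heps) as [p [_ Hp]]; eauto.
  - exists x; now apply (tail_balls_inter_limit u).
Qed.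

End StarMetric.

Theorem theorem4p10 (X : Type) (x0 : X) (star : R -> R -> R) (d : X -> X -> R)
  (Hstar : t_definer star) (Hd : star_metric star d) :
  sm_complete d <->
  (forall (S : Type) (F : S -> X -> Prop),
     (forall s, sm_closed d (F s)) ->
     finite_intersection_property F ->
     (forall eps, 0 < eps -> exists s, Rbar_lt (diam d (F s)) (Finite eps)) ->
     exists x, forall s, F s x).
Proof.
  split.
  - intros Hcomp I F; exact (complete_closed_fip_inter star d Hstar Hd I F Hcomp).
  - exact (closed_fip_inter_complete star d Hstar Hd).
Qed.
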